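(* Let $n\in\mathbb{N}$, $\mathcal{R}\subset\mathcal{H}_n$, and let $\mathbb{T}$ be a generator set of $\mathcal{R}$. Then for all $A_1,A_2\subset[n]$, $$\{\mathcal{O}_{A_1},\mathcal{O}_{A_1^c}\}=\{\mathcal{O}_{A_2},\mathcal{O}_{A_2^c}\}\iff A_1\sim_{\mathcal{R}}A_2 .$$
   Context: $[n]=\{1,\dots,n\}$, $A^c=[n]\setminus A$. $\mathcal{H}_n$ is the computational basis $\{|i_1\dots i_n\rangle: i_j\in\{0,1\}\}$. For $|\psi\rangle=|a_1\dots a_n\rangle$ and non-empty $A=\{i_1<\dots<i_m\}\subset[n]$, $|\psi_A\rangle=|a_{i_1}\dots a_{i_m}\rangle$. For non-empty $A$, $\sim_A$ on $\mathcal{R}$ is: $|\psi\rangle\sim_A|\phi\rangle$ iff $|\psi_A\rangle=|\phi_A\rangle$; $\sim_\emptyset$ makes all elements equivalent; $\mathcal{R}/{\sim_A}$ is the set of classes. $A_1\sim_{\mathcal{R}}A_2$ iff $\{\mathcal{R}/{\sim_{A_1}},\mathcal{R}/{\sim_{A_1^c}}\}=\{\mathcal{R}/{\sim_{A_2}},\mathcal{R}/{\sim_{A_2^c}}\}$. For a set $F$ of maps $\mathcal{R}\to\mathcal{R}$, $\mathcal{G}(F)$ denotes the closure of $F$ under composition. A set $\mathbb{T}$ of maps $\mathcal{R}\to\mathcal{R}$ is a generator set of $\mathcal{R}$ if: (i) all $P,T\in\mathcal{G}(\mathbb{T})$ commute, $PT=TP$; (ii) for all $|\psi\rangle,|\phi\rangle\in\mathcal{R}$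 there is $P\in\mathcal{G}(\mathbb{T})$ with $P|\psi\rangle=|\phi\rangle$; (iii) (local invariance) for every $P\in\mathbb{T}$ and non-empty $A\subset[n]$, if $(P|\psi\rangle)_A=|\psi_A\rangle$ for some $|\psi\rangle\in\mathcal{R}$, then $(P|\phi\rangle)_A=|\phi_A\rangle$ for all $|\phi\rangle\in\mathcal{R}$. For non-empty $A\subset[n]$, $\mathcal{O}_A=\{P\in\mathcal{G}(\mathbb{T}) : \forall|\psi\rangle\in\mathcal{R},\ (P|\psi\rangle)_A=|\psi_A\rangle\}$, and $\mathcal{O}_\emptyset=\mathcal{G}(\mathbb{T})$. Operators are compared as maps on $\mathcal{R}$. *)

From mathcomp Require Import all_boot.
Set Implicit Arguments. Unset Strict Implicit. Unset Printing Implicit Defensive.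

(* Computational basis states of n qubits: bit strings |i_1 ... i_n>,
   encoded as functions 'I_n -> bool (qubit j ~ index j-1). *)
Notation basis n := {ffun 'I_n -> bool}.

Notation state R := {x : basis _ | x \in R}.

(* Maps R -> R, compared as maps on R (finite functions: Leibniz = extensional). *)
Notation op R := {ffun state R -> state R}.

Section Defs.
Variables (n : nat) (R : {set basis n}).

Definition compo (P Q : op R) : op R := [ffun x => P (Q x)].

Inductive gen (F : {set op R}) : op R -> Prop :=
| gen_base P : P \in F -> gen F P
| gen_comp P Q : gen F P -> gen F Q -> gen F (compo P Q).

(* |psi_A> = |phi_A>  (vacuous for A empty, matching ~_emptyset). *)
Definition agree (A : {set 'I_n}) (x y : basis n) : bool :=
  [forall i in A, x i == y i].

Definition classes (A : {set 'I_n}) : {set {set state R}} :=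
  [set [set y : state R | agree A (val x) (val y)] | x : state R].

Definition simR (A1 A2 : {set 'I_n}) : Prop :=
  [set classes A1; classes (~: A1)] = [set classes A2; classes (~: A2)].

Definition generator_set (T : {set op R}) : Prop :=
  [/\ (forall P Q, gen T P -> gen T Q -> compo P Q = compo Q P),
      (forall psi phi : state R, exists2 P, gen T P & P psi = phi) &
      (forall P, P \in T -> forall A : {set 'I_n}, A != set0 ->
         (exists psi : state R, agree A (val (P psi)) (val psi)) ->
         forall phi : state R, agree A (val (P phi)) (val phi))].

Definition O (T : {set op R}) (A : {set 'I_n}) : op R -> Prop :=
  fun P => gen T P /\
    (A != set0 -> forall psi : state R, agree A (val (P psi)) (val psi)).

Definition eqset (X Y : op R -> Prop) : Prop := forall P, X P <-> Y P.

Definition eqpair (X1 Y1 X2 Y2 : op R -> Prop) : Prop :=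
  (eqset X1 X2 /\ eqset Y1 Y2) \/ (eqset X1 Y2 /\ eqset Y1 X2).

End Defs.

From Stdlib Require Import Setoid.
From mathcomp Require Import all_boot.

Set Implicit Arguments.
Unset Strict Implicit.
Unset Printing Implicit Defensive.

(* Every operator of G(T) either always or never flips a given qubit: local
   invariance gives this for the generators, and flip patterns compose by xor.
   Hence P in G(T) lies in O_A as soon as it fixes the A-part of a single state.
   Since G(T) acts transitively, for each pair psi, phi there is P in G(T)
   with P psi = phi, and P is in O_A exactly when psi ~_A phi; so O_A
   determines ~_A and conversely, i.e. O_A = O_B iff R/~_A = R/~_B. *)

Lemma eq_set2 (T : finType) (a b c d : T) :
  [set a; b] = [set c; d] <-> (a = c /\ b = d) \/ (a = d /\ b = c).
Proof.
split=> [E|[[-> ->]|[-> ->]]]; last 2 first.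
- by [].
- by apply/setP => x; rewrite !inE orbC.
have /set2P ha : a \in [set c; d] by rewrite -E set21.
have /set2P hb : b \in [set c; d] by rewrite -E set22.
have /set2P hc : c \in [set a; b] by rewrite E set21.
have /set2P hd : d \in [set a; b] by rewrite E set22.
by case: ha hb hc hd => ? [] ? [] ? [] ?; subst; auto.
Qed.

Lemma eq_class_sets {T : finType} (e1 e2 : rel T) :
  equivalence_rel e1 -> equivalence_rel e2 ->
  [set [set y | e1 x y] | x : T] = [set [set y | e2 x y] | x : T] <-> e1 =2 e2.
Proof.
have sub_classes (f g : rel T) : equivalence_rel f -> equivalence_rel g ->
    [set [set y | f x y] | x : T] = [set [set y | g x y] | x : T] ->
    forall x y, g x y -> f x y.
  move=> f_eq g_eq E x y gxy.
  have /imsetP[w _ Ew] : [set y | g x y] \in [set [set y | f x y] | x : T].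
    by rewrite E imset_f.
  have : x \in [set y | g x y] by rewrite inE (g_eq x x x).1.
  have : y \in [set y | g x y] by rewrite inE.
  by rewrite Ew !inE => fwy fwx; rewrite -(f_eq w x y).2.
move=> e1_eq e2_eq; split=> [E x y|E].
  by apply/idP/idP; apply: sub_classes => //; rewrite E.
by apply: eq_imset => x; apply/setP => y; rewrite !inE E.
Qed.

Section Agreement.
Variable n : nat.

Lemma agree_set1 (i : 'I_n) (u v : basis n) : agree [set i] u v = (u i == v i).
Proof.
apply/forall_inP/eqP => [uv|uv j]; first exact/eqP/uv/set11.
by rewrite in_set1 => /eqP ->; rewrite uv.
Qed.

Lemma agree_set0 (u v : basis n) : agree set0 u v.
Proof. by apply/forall_inP => i; rewrite inE. Qed.

Lemma agree_sym (A : {set 'I_n}) : symmetric (agree A).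
Proof. by move=> u v; apply/forall_inP/forall_inP => uv i /uv /eqP ->. Qed.

Lemma agree_equiv (A : {set 'I_n}) : equivalence_rel (agree A).
Proof.
move=> u v w; split; first exact/forall_inP.
move=> /forall_inP uv; apply/forall_inP/forall_inP => H i iA.
  by rewrite -(eqP (uv i iA)) H.
by rewrite (eqP (uv i iA)) H.
Qed.

End Agreement.

Section Generators.
Variables (n : nat) (R : {set basis n}) (T : {set op R}).

Lemma O_fixes (A : {set 'I_n}) (P : op R) :
  O T A P <-> gen T P /\ forall psi : state R, agree A (val (P psi)) (val psi).
Proof.
split=> [[genP fixP]|[genP fixP]]; split=> // psi.
by have [->|/fixP] := eqVneq A set0; [apply: agree_set0|].
Qed.

Lemma classes_eq (A B : {set 'I_n}) :
  classes R A = classes R B <->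
  forall x y : state R, agree A (val x) (val y) = agree B (val x) (val y).
Proof.
have equiv C : equivalence_rel (fun x y : state R => agree C (val x) (val y)).
  by move=> x y z; apply: agree_equiv.
exact: eq_class_sets (equiv A) (equiv B).
Qed.

Hypothesis local_inv : forall P, P \in T -> forall A : {set 'I_n}, A != set0 ->
  (exists psi : state R, agree A (val (P psi)) (val psi)) ->
  forall phi : state R, agree A (val (P phi)) (val phi).

Lemma gen_fixes_bit_uniform P : gen T P -> forall i (x y : state R),
  (val (P x) i == val x i) = (val (P y) i == val y i).
Proof.
elim=> {P} [P PT|P Q _ IHP _ IHQ] i x y.
  have i_ne0 : [set i] != set0 by apply/set0Pn; exists i; apply: set11.
  by apply/idP/idP => fix_i; rewrite -agree_set1;
     apply: (local_inv PT i_ne0); [exists x|exists y]; rewrite agree_set1.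
have xor3 (a b c : bool) : (a == c) = ((a == b) == (b == c)).
  by case: a b c => [] [] [].
rewrite /compo !ffunE [LHS](xor3 _ (val (Q x) i)) [RHS](xor3 _ (val (Q y) i)).
by rewrite (IHP i (Q x) (Q y)) (IHQ i x y).
Qed.

Lemma gen_O_at (A : {set 'I_n}) P (x : state R) : gen T P ->
  O T A P <-> agree A (val (P x)) (val x).
Proof.
move=> genP; split=> [/O_fixes[_ /(_ x)] //|/forall_inP fix_x].
apply/O_fixes; split=> // y; apply/forall_inP => i iA.
by rewrite -(gen_fixes_bit_uniform genP i x y) fix_x.
Qed.

End Generators.

Lemma eqset_O (n : nat) (R : {set basis n}) (T : {set op R}) (A B : {set 'I_n}) :
  generator_set T -> eqset (O T A) (O T B) <-> classes R A = classes R B.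
Proof.
case=> _ transitive local_inv; rewrite classes_eq; split=> [E x y|E P].
- have [P genP <-] := transitive x y.
  rewrite ![agree _ (val x) _]agree_sym.
  have O_at C : O T C P <-> agree C (val (P x)) (val x) :=
    gen_O_at local_inv C x genP.
  by apply/idP/idP => /O_at /E /O_at.
- rewrite !O_fixes; split=> -[genP fixP]; split=> // psi.
  + by rewrite -E.
  + by rewrite E.
Qed.

Theorem theorem2 (n : nat) (R : {set basis n}) (T : {set op R}) :
  generator_set T ->
  forall A1 A2 : {set 'I_n},
    eqpair (O T A1) (O T (~: A1)) (O T A2) (O T (~: A2)) <-> simR R A1 A2.
Proof.
by move=> genT A1 A2; rewrite /eqpair /simR eq_set2 !(eqset_O _ _ genT).
Qed.
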